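(* Under Condition ASM (see context), $\|\mathbb{E}_n[x_ir_i]\|_\infty\leqslant\min\{\sigma/\sqrt n,\ c_s\}$.
   Context: Condition ASM: observations $(y_i,z_i)$, $i=1,\dots,n$, $z_i$ fixed, $y_i=f(z_i)+\varepsilon_i$, $\varepsilon_i$ i.i.d. $N(0,\sigma^2)$, $\sigma>0$; $f_i=f(z_i)$, $\mathbb{E}_n[a_i]=n^{-1}\sum_ia_i$; $x_i=P(z_i)\in\mathbb{R}^p$ (including a constant) normalized so that $\mathbb{E}_n[x_{ij}^2]=1$ for each $j$. $\beta_0$ is any solution of $\min_{\beta\in\mathbb{R}^p}\mathbb{E}_n[(f_i-x_i'\beta)^2]+\sigma^2\|\beta\|_0/n$, with $\|\beta\|_0$ the number of nonzero entries; $s=\|\beta_0\|_0$; $r_i=f_i-x_i'\beta_0$; $c_s=\sqrt{\mathbb{E}_n[r_i^2]}$, and $c_s\leqslant K\sigma\sqrt{s/n}$ for an absolute constant $K$. *)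

From HB Require Import structures.
From mathcomp Require Import all_boot all_order all_algebra.
Set Implicit Arguments. Unset Strict Implicit. Unset Printing Implicit Defensive.
Import Order.TTheory GRing.Theory Num.Theory.
Local Open Scope ring_scope.

Definition En (R : fieldType) (n : nat) (a : 'I_n -> R) : R :=
  (\sum_(i < n) a i) / n%:R.

Definition dotp (R : fieldType) (p : nat) (u v : 'I_p -> R) : R :=
  \sum_(j < p) u j * v j.

Definition l0norm (R : fieldType) (p : nat) (b : 'I_p -> R) : nat :=
  #|[set j : 'I_p | b j != 0]|.

(* ||v||_inf (with the convention 0 for p = 0). *)
Definition linf (R : realDomainType) (p : nat) (v : 'I_p -> R) : R :=
  \big[Num.max/0]_(j < p) `|v j|.

Definition oracle_obj (R : fieldType) (n p : nat) (f : 'I_n -> R)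
    (x : 'I_n -> 'I_p -> R) (sigma : R) (b : 'I_p -> R) : R :=
  En (fun i => (f i - dotp (x i) b) ^+ 2) + sigma ^+ 2 * (l0norm b)%:R / n%:R.

From HB Require Import structures.
From mathcomp Require Import all_boot all_order all_algebra.
From mathcomp Require Import ring lra.
Set Implicit Arguments. Unset Strict Implicit. Unset Printing Implicit Defensive.
Import Order.TTheory GRing.Theory Num.Theory.
Local Open Scope ring_scope.

(* Write v_j := E_n[x_ij r_i].  Moving beta0 by t along the j-th coordinate
   changes the mean squared residual to c_s^2 - 2 t v_j + t^2, because
   E_n[x_ij^2] = 1.  At t = v_j this is c_s^2 - v_j^2: nonnegativity gives
   |v_j| <= c_s, and comparing with the oracle optimality of beta0, which
   costs at most one extra nonzero entry, i.e. sigma^2/n, gives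
   v_j^2 <= sigma^2/n. *)

Definition bump (R : pzRingType) (p : nat) (b : 'I_p -> R) (j : 'I_p) (t : R) :
    'I_p -> R :=
  fun k => b k + t * (k == j)%:R.

Lemma dotp_bump (R : fieldType) (p : nat) (u b : 'I_p -> R) (j : 'I_p) (t : R) :
  dotp u (bump b j t) = dotp u b + t * u j.
Proof.
rewrite /dotp /bump; under eq_bigr => k _ do rewrite mulrDr.
rewrite big_split /=; congr (_ + _).
rewrite (bigD1 j) //= big1 => [|k /negbTE ->]; last by rewrite !mulr0.
by rewrite eqxx addr0 mulr1 mulrC.
Qed.

Lemma l0norm_bump (R : fieldType) (p : nat) (b : 'I_p -> R) (j : 'I_p) (t : R) :
  (l0norm (bump b j t) <= (l0norm b).+1)%N.
Proof.
rewrite /l0norm; apply: (@leq_trans #|j |: [set k | b k != 0]|).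
  apply/subset_leq_card/subsetP => k; rewrite !inE /bump.
  by case: (eqVneq k j) => [-> | _] /=; rewrite ?eqxx ?orbT // mulr0 addr0.
by rewrite cardsU1; case: (j \notin _).
Qed.

Lemma En_sqr_ge0 (R : realFieldType) (n : nat) (a : 'I_n -> R) :
  0 <= En (fun i => a i ^+ 2).
Proof. by rewrite /En divr_ge0 // sumr_ge0 // => i _; exact: sqr_ge0. Qed.

Lemma En_sqr_subZ (R : fieldType) (n : nat) (r y : 'I_n -> R) (t : R) :
  En (fun i => (r i - t * y i) ^+ 2) =
  En (fun i => r i ^+ 2) - 2%:R * t * En (fun i => y i * r i)
  + t ^+ 2 * En (fun i => y i ^+ 2).
Proof.
rewrite /En.
have -> : \sum_(i < n) (r i - t * y i) ^+ 2 =
    \sum_(i < n) r i ^+ 2 - 2%:R * t * \sum_(i < n) y i * r i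
    + t ^+ 2 * \sum_(i < n) y i ^+ 2.
  by rewrite !mulr_sumr -sumrN -!big_split /=; apply: eq_bigr => i _; ring.
ring.
Qed.

Lemma abs_le_sqrt (R : rcfType) (v c : R) : v ^+ 2 <= c -> `|v| <= Num.sqrt c.
Proof. by move=> vc; rewrite -sqrtr_sqr ler_wsqrtr. Qed.

Lemma linf_le (R : realDomainType) (p : nat) (v : 'I_p -> R) (c : R) :
  0 <= c -> (forall j, `|v j| <= c) -> linf v <= c.
Proof. by move=> c0 vc; apply: bigmax_le. Qed.

Section NormalizedRegression.

Variables (R : realFieldType) (n p : nat) (f : 'I_n -> R) (x : 'I_n -> 'I_p -> R).
Hypothesis x_normed : forall j, En (fun i => x i j ^+ 2) = 1.

Lemma En_sqr_sub_score (r : 'I_n -> R) (j : 'I_p) :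
  let v := En (fun i => x i j * r i) in
  En (fun i => (r i - v * x i j) ^+ 2) = En (fun i => r i ^+ 2) - v ^+ 2.
Proof. by rewrite /= En_sqr_subZ x_normed; ring. Qed.

Lemma score_sqr_le_msq (r : 'I_n -> R) (j : 'I_p) :
  En (fun i => x i j * r i) ^+ 2 <= En (fun i => r i ^+ 2).
Proof. by rewrite -subr_ge0 -En_sqr_sub_score En_sqr_ge0. Qed.

Lemma oracle_score_sqr_le (sigma : R) (b : 'I_p -> R) (j : 'I_p) :
  (forall b', oracle_obj f x sigma b <= oracle_obj f x sigma b') ->
  En (fun i => x i j * (f i - dotp (x i) b)) ^+ 2 <= sigma ^+ 2 / n%:R.
Proof.
set r := fun i => f i - dotp (x i) b; set v := En _ => b_opt.
have := b_opt (bump b j v); rewrite /oracle_obj.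
have -> : En (fun i => (f i - dotp (x i) (bump b j v)) ^+ 2)
          = En (fun i => r i ^+ 2) - v ^+ 2.
  rewrite -(En_sqr_sub_score r j) -/v /En; congr (_ / _); apply: eq_bigr => i _.
  by rewrite dotp_bump /r; congr (_ ^+ 2); ring.
have s0 : 0 <= sigma ^+ 2 / n%:R by rewrite divr_ge0 ?sqr_ge0.
have extra_cost : sigma ^+ 2 * (l0norm (bump b j v))%:R / n%:R
    <= sigma ^+ 2 * (l0norm b)%:R / n%:R + sigma ^+ 2 / n%:R.
  have l0R : (l0norm (bump b j v))%:R <= (l0norm b)%:R + 1 :> R.
    by rewrite natr1 ler_nat l0norm_bump.
  have mulE L : sigma ^+ 2 * L / n%:R = L * (sigma ^+ 2 / n%:R) by ring.
  by rewrite !mulE -[X in _ + X]mul1r -mulrDl ler_wpM2r.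
lra.
Qed.

End NormalizedRegression.

Lemma sqrt_sqr_div (R : rcfType) (s m : R) :
  0 <= s -> 0 <= m -> s / Num.sqrt m = Num.sqrt (s ^+ 2 / m).
Proof. by move=> s0 m0; rewrite sqrtrM ?sqr_ge0 // sqrtr_sqr ger0_norm // sqrtrV. Qed.

Theorem lemma6 (R : rcfType) (Z : Type) (n p : nat)
    (z : 'I_n -> Z) (fz : Z -> R) (P : Z -> 'I_p -> R) (sigma K : R)
    (beta0 : 'I_p -> R) :
  (0 < n)%N ->
  0 < sigma ->
  (* x_i includes a constant regressor *)
  (exists j0 : 'I_p, exists c : R, forall i : 'I_n, P (z i) j0 = c) ->
  (* normalization E_n[x_ij^2] = 1 *)
  (forall j : 'I_p, En (fun i : 'I_n => P (z i) j ^+ 2) = 1) ->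
  (* beta0 solves the oracle problem *)
  (forall b : 'I_p -> R,
      oracle_obj (fun i => fz (z i)) (fun i => P (z i)) sigma beta0
      <= oracle_obj (fun i => fz (z i)) (fun i => P (z i)) sigma b) ->
  (* c_s <= K sigma sqrt(s/n) *)
  Num.sqrt (En (fun i => (fz (z i) - dotp (P (z i)) beta0) ^+ 2))
    <= K * sigma * Num.sqrt ((l0norm beta0)%:R / n%:R) ->
  linf (fun j : 'I_p => En (fun i : 'I_n => P (z i) j * (fz (z i) - dotp (P (z i)) beta0)))
    <= Num.min (sigma / Num.sqrt n%:R)
               (Num.sqrt (En (fun i => (fz (z i) - dotp (P (z i)) beta0) ^+ 2))).
Proof.
move=> _ sigma_gt0 _ x_normed beta0_opt _.
apply: linf_le => [|j]; first by rewrite le_min divr_ge0 ?sqrtr_ge0 ?ltW.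
rewrite le_min; apply/andP; split.
  rewrite sqrt_sqr_div ?ler0n ?(ltW sigma_gt0) //; apply: abs_le_sqrt.
  exact: (oracle_score_sqr_le x_normed).
by apply: abs_le_sqrt; apply: (score_sqr_le_msq x_normed).
Qed.
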